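(* Let $f:[\frac13,2]\to[\frac13,2]$ be defined by $f(x)=2x$ if $x\in[\frac13,1)$ and $f(x)=\frac{x}{3}$ if $x\in[1,2]$. For every nonempty open interval $I\subseteq[\frac13,2]$ there exists an integer $N$ such that for every $x\in[\frac13,2]$ and every $n\ge0$ with $f^n(x)\in I$, there is $m$ with $n<m\le n+N$ and $f^m(x)\in I$; i.e. the number of iterations of $f$ between two successive visits of an orbit to $I$ is bounded uniformly. *)

From Stdlib Require Import Reals Lra.
Open Scope R_scope.

(* The map f on [1/3,2]: f x = 2x on [1/3,1), f x = x/3 on [1,2].
   Extended to all of R by the same case split (values outside [1/3,2]
   are never used, since [1/3,2] is f-invariant). *)
Definition f (x : R) : R :=
  if Rlt_dec x 1 then 2 * x else x / 3.

Fixpoint f_iter (n : nat) (x : R) : R :=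
  match n with
  | O => x
  | S k => f (f_iter k x)
  end.

From Pilot Require Import Defs.
From Stdlib Require Import Reals ZArith Lra Lia List Classical.
Open Scope R_scope.

(* The change of variable y |-> ln (3 y) maps [1/3, 2] onto [0, ln 6] and turns f into the
   rotation t |-> t + ln 2 (mod ln 6).  This rotation is irrational because 2^K <> 6^z.
   By pigeonhole, some iterate of an irrational rotation is a rotation by an arbitrarily
   small positive angle d, and a rotation by d visits every arc longer than d within
   about L / d steps, from every starting point. *)

Lemma nat_pigeonhole (N : nat) (b : nat -> nat) :
  (forall k, (k <= N)%nat -> (b k < N)%nat) ->
  exists i j, (i < j <= N)%nat /\ b i = b j.
Proof.
  intros Hb. apply NNPP; intros Hcoll.
  assert (Hnodup : NoDup (map b (seq 0 (S N)))).
  { apply NoDup_map_NoDup_ForallPairs; [|apply seq_NoDup].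
    intros i j Hi Hj Hij. apply in_seq in Hi, Hj.
    destruct (Nat.lt_trichotomy i j) as [Hlt | [Heq | Hgt]]; trivial;
      exfalso; apply Hcoll; [exists i, j | exists j, i]; split; auto; lia. }
  assert (Hincl : incl (map b (seq 0 (S N))) (seq 0 N)).
  { intros y Hy. apply in_map_iff in Hy as [k [<- Hk]]. apply in_seq in Hk.
    apply in_seq. specialize (Hb k). lia. }
  pose proof (NoDup_incl_length Hnodup Hincl) as Hlen.
  rewrite length_map, !length_seq in Hlen. lia.
Qed.

Lemma bounded_seq_close_pair (L eps : R) (p : nat -> R) : 0 < eps ->
  (forall k, 0 <= p k < L) -> exists i j, (i < j)%nat /\ Rabs (p j - p i) < eps.
Proof.
  intros Heps Hp.
  destruct (INR_archimed eps L Heps) as [N HN].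
  set (bin k := Z.to_nat (Int_part (p k / eps))).
  assert (Hbin : forall k, 0 <= IZR (Int_part (p k / eps)) <= p k / eps
                      /\ p k / eps < IZR (Int_part (p k / eps)) + 1).
  { intro k. destruct (base_Int_part (p k / eps)) as [Hle Hgt].
    assert (0 <= p k / eps)
      by (apply Rmult_le_pos; [apply Hp | left; apply Rinv_0_lt_compat; lra]).
    assert (-1 < Int_part (p k / eps))%Z by (apply lt_IZR; simpl; lra).
    split; [split; [apply IZR_le; lia | lra] | lra]. }
  destruct (nat_pigeonhole N bin) as [i [j [Hij Hsame]]].
  { intros k _. unfold bin. apply Nat2Z.inj_lt. destruct (Hbin k) as [[H0 _] _].
    rewrite Z2Nat.id by (apply le_IZR; lra). apply lt_IZR. rewrite <- INR_IZR_INZ.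
    destruct (Hp k). apply Rle_lt_trans with (p k / eps); [apply Hbin |].
    apply Rmult_lt_reg_r with eps; [lra|]. unfold Rdiv. rewrite Rmult_assoc, Rinv_l; lra. }
  exists i, j. split; [lia|].
  unfold bin in Hsame. destruct (Hbin i) as [[Hi0 Hi1] Hi2], (Hbin j) as [[Hj0 Hj1] Hj2].
  apply Z2Nat.inj in Hsame; [| apply le_IZR; lra | apply le_IZR; lra]. rewrite Hsame in *.
  assert (Hscale : forall x, x / eps * eps = x) by (intro; field; lra).
  rewrite <- (Hscale (p j)), <- (Hscale (p i)). apply Rabs_def1; nra.
Qed.

Lemma ln_le_ln x y : 0 < x -> x <= y -> ln x <= ln y.
Proof. intros Hx Hxy. apply Rnot_lt_le. intros H. apply ln_lt_inv in H; lra. Qed.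

Section CircleRotation.

Variable L : R.

(* Rotation by the angle d on the circle of length L, represented by [0, L). *)
Definition rot (d t : R) : R := if Rlt_dec (t + d) L then t + d else t + d - L.

Definition circ_dist (u v : R) : R := if Rle_dec u v then v - u else v - u + L.

Lemma rot_range d t : 0 <= d < L -> 0 <= t <= L -> 0 <= rot d t < L.
Proof. intros; unfold rot; destruct Rlt_dec; lra. Qed.

Lemma iter_rot_range d n t : 0 <= d < L -> 0 <= t < L -> 0 <= Nat.iter n (rot d) t < L.
Proof.
  intros Hd. apply Nat.iter_invariant with (Inv := fun u => 0 <= u < L).
  intros u Hu. apply rot_range; lra.
Qed.

Lemma iter_rot_range_closed d n t :
  0 <= d < L -> 0 <= t <= L -> 0 <= Nat.iter n (rot d) t <= L.
Proof.
  intros Hd. apply Nat.iter_invariant with (Inv := fun u => 0 <= u <= L).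
  intros u Hu. pose proof (rot_range d u Hd Hu). lra.
Qed.

Lemma iter_rot_mod d n t : exists z, Nat.iter n (rot d) t = t + INR n * d + IZR z * L.
Proof.
  induction n as [|n [z IH]].
  - exists 0%Z. simpl. lra.
  - rewrite Nat.iter_succ, S_INR. unfold rot at 1. destruct Rlt_dec.
    + exists z. lra.
    + exists (z - 1)%Z. rewrite minus_IZR. lra.
Qed.

Lemma eq_mod_circ x y z : 0 <= x < L -> 0 <= y < L -> x = y + IZR z * L -> x = y.
Proof.
  intros Hx Hy H.
  destruct (Z.lt_trichotomy z 0) as [Hz | [-> | Hz]].
  - assert (IZR z <= -1) by (apply IZR_le; lia). nra.
  - simpl in H. lra.
  - assert (1 <= IZR z) by (apply IZR_le; lia). nra.
Qed.

Lemma iter_rot_rot d K t : 0 <= d < L -> 0 <= t < L ->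
  Nat.iter K (rot d) t = rot (Nat.iter K (rot d) 0) t.
Proof.
  intros Hd Ht.
  pose proof (iter_rot_range d K t Hd Ht) as HKt.
  pose proof (iter_rot_range d K 0 Hd ltac:(lra)) as HK0.
  destruct (iter_rot_mod d K t) as [z1 H1], (iter_rot_mod d K 0) as [z2 H2].
  set (d0 := Nat.iter K (rot d) 0) in *.
  change (rot d0 t) with (if Rlt_dec (t + d0) L then t + d0 else t + d0 - L).
  destruct Rlt_dec.
  - apply eq_mod_circ with (z1 - z2)%Z; [assumption | lra | rewrite minus_IZR; lra].
  - apply eq_mod_circ with (z1 - z2 + 1)%Z;
      [assumption | lra | rewrite plus_IZR, minus_IZR; lra].
Qed.

Lemma iter_rot_mul d j K t : 0 <= d < L -> 0 <= t < L ->
  Nat.iter (j * K) (rot d) t = Nat.iter j (rot (Nat.iter K (rot d) 0)) t.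
Proof.
  intros Hd Ht. induction j as [|j IH]; [reflexivity|].
  rewrite Nat.mul_succ_l, Nat.add_comm, Nat.iter_add, Nat.iter_succ, <- IH.
  apply iter_rot_rot; [assumption | apply iter_rot_range; assumption].
Qed.

Section SmallRotation.

Variables c e d : R.
Hypothesis c_nonneg : 0 <= c.
Hypothesis e_le_L : e <= L.
Hypothesis d_small : 0 < d < e - c.

(* Each step that misses the arc (c, e) brings the orbit exactly d closer to c. *)
Lemma rot_visits_arc_within n u : 0 <= u <= L -> circ_dist u c < INR n * d ->
  exists j, (1 <= j <= n)%nat /\ c < Nat.iter j (rot d) u < e.
Proof.
  revert u. induction n as [|n IH]; intros u Hu Hdist.
  - unfold circ_dist in Hdist. simpl in Hdist. destruct Rle_dec; lra.
  - destruct (Rlt_dec c (rot d u)) as [Hc|Hc], (Rlt_dec (rot d u) e) as [He|He];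
      [exists 1%nat; split; [lia | simpl; lra] | ..].
    all: destruct (IH (rot d u)) as [j [Hj Hvisit]];
      [ pose proof (rot_range d u ltac:(lra) Hu); lra
      | rewrite S_INR in Hdist; unfold circ_dist, rot in *;
        destruct (Rlt_dec (u + d) L), (Rle_dec u c), (Rle_dec _ c); lra
      | exists (S j); split; [lia | rewrite Nat.iter_succ_r; assumption] ].
Qed.

Lemma rot_visits_arc n u : L < INR n * d -> 0 <= u <= L ->
  exists j, (1 <= j <= n)%nat /\ c < Nat.iter j (rot d) u < e.
Proof.
  intros Hn Hu. apply rot_visits_arc_within; [assumption|].
  unfold circ_dist. destruct Rle_dec; lra.
Qed.

End SmallRotation.

Lemma rot_back_descends eta n u : 0 < eta < L -> 0 <= u < L -> u < INR n * eta ->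
  exists m, Nat.iter m (rot (L - eta)) u < eta.
Proof.
  intros Heta. revert u. induction n as [|n IH]; intros u Hu Hn.
  - simpl in Hn. lra.
  - destruct (Rlt_dec u eta) as [Hlt|Hge].
    + exists 0%nat. assumption.
    + assert (Hstep : rot (L - eta) u = u - eta) by (unfold rot; destruct Rlt_dec; lra).
      rewrite S_INR in Hn. destruct (IH (u - eta)) as [m Hm]; [lra | lra |].
      exists (S m). rewrite Nat.iter_succ_r, Hstep. assumption.
Qed.

Section IrrationalRotation.

Variable alpha : R.
Hypothesis alpha_range : 0 < alpha < L.
Hypothesis alpha_irrational :
  forall (K : nat) (z : Z), (1 <= K)%nat -> INR K * alpha <> IZR z * L.

Lemma rot_aperiodic K t : (1 <= K)%nat -> Nat.iter K (rot alpha) t <> t.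
Proof.
  intros HK Hper. destruct (iter_rot_mod alpha K t) as [z Hz].
  apply (alpha_irrational K (- z) HK). rewrite opp_IZR. lra.
Qed.

Lemma rot_near_return eps : 0 < eps -> exists K, (1 <= K)%nat /\
  0 < Nat.iter K (rot alpha) 0 /\
  (Nat.iter K (rot alpha) 0 < eps \/ L - eps < Nat.iter K (rot alpha) 0).
Proof.
  intros Heps.
  set (p k := Nat.iter k (rot alpha) 0).
  assert (Hp : forall k, 0 <= p k < L) by (intro k; apply iter_rot_range; lra).
  destruct (bounded_seq_close_pair L eps p Heps Hp) as [i [j [Hij Hclose]]].
  exists (j - i)%nat. split; [lia|].
  assert (Hjump : p j = Nat.iter (j - i) (rot alpha) (p i)).
  { unfold p. rewrite <- Nat.iter_add. f_equal. lia. }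
  assert (Hshift : p j = rot (p (j - i)%nat) (p i)).
  { rewrite Hjump. apply iter_rot_rot; [lra | apply Hp]. }
  assert (Hpos : p (j - i)%nat <> 0).
  { intro H0. apply (rot_aperiodic (j - i) (p i)); [lia|].
    rewrite <- Hjump, Hshift, H0. unfold rot. destruct (Hp i). destruct Rlt_dec; lra. }
  fold (p (j - i)%nat). destruct (Hp (j - i)%nat), (Hp i), (Hp j).
  apply Rabs_def2 in Hclose.
  split; [lra|]. unfold rot in Hshift. destruct Rlt_dec; [left | right]; lra.
Qed.

Lemma rot_small_return eps : 0 < eps ->
  exists K, (1 <= K)%nat /\ 0 < Nat.iter K (rot alpha) 0 < eps.
Proof.
  intros Heps. destruct (rot_near_return eps Heps) as [K [HK [Hpos [Hsmall | Hlarge]]]].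
  - exists K. split; [|split]; assumption.
  - set (d := Nat.iter K (rot alpha) 0) in Hpos, Hlarge.
    assert (Hd : d < L) by (apply iter_rot_range; lra).
    (* The K-th iterate steps backwards by eta; walking down, the orbit enters (0, eta). *)
    set (eta := L - d).
    destruct (INR_archimed eta L ltac:(unfold eta; lra)) as [n Hn].
    destruct (rot_back_descends eta n d) as [m Hm]; [unfold eta; lra | lra | lra |].
    replace (L - eta) with d in Hm by (unfold eta; ring).
    assert (Hiter : Nat.iter (S m * K) (rot alpha) 0 = Nat.iter m (rot d) d).
    { rewrite iter_rot_mul, Nat.iter_succ_r by lra. fold d. f_equal.
      unfold rot. destruct Rlt_dec; lra. }
    exists (S m * K)%nat. split; [nia|].
    pose proof (iter_rot_range alpha (S m * K) 0 ltac:(lra) ltac:(lra)) as [H0 _].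
    destruct H0 as [Hlt | Heq]; [unfold eta in Hm; lra |].
    exfalso. apply (rot_aperiodic (S m * K) 0); [nia | auto].
Qed.

Lemma rot_uniformly_recurrent c e : 0 <= c -> c < e -> e <= L ->
  exists N, forall u, 0 <= u <= L ->
    exists j, (1 <= j <= N)%nat /\ c < Nat.iter j (rot alpha) u < e.
Proof.
  intros Hc Hce He.
  destruct (rot_small_return (e - c)) as [K [HK Hd]]; [lra|].
  set (d := Nat.iter K (rot alpha) 0) in Hd.
  destruct (INR_archimed d L ltac:(lra)) as [n Hn].
  (* One preliminary step moves u = L into [0, L), where iter_rot_mul applies. *)
  exists (n * K + 1)%nat. intros u Hu.
  pose proof (rot_range alpha u ltac:(lra) Hu) as Hu1.
  destruct (rot_visits_arc c e d Hc He ltac:(lra) n (rot alpha u) ltac:(lra) ltac:(lra))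
    as [j [Hj Hvisit]].
  exists (j * K + 1)%nat. split; [nia|].
  rewrite Nat.iter_add, iter_rot_mul by (simpl; lra). exact Hvisit.
Qed.

End IrrationalRotation.

End CircleRotation.

Lemma pow2_mod3_nonzero K : (2 ^ K mod 3 <> 0)%nat.
Proof.
  induction K as [|K IH]; [discriminate|].
  rewrite Nat.pow_succ_r', <- Nat.Div0.mul_mod_idemp_r.
  pose proof (Nat.mod_upper_bound (2 ^ K) 3 ltac:(lia)).
  destruct (2 ^ K mod 3) as [|[|[|r]]]; simpl; lia.
Qed.

Lemma ln2_ln6_irrational K z : (1 <= K)%nat -> INR K * ln 2 <> IZR z * ln 6.
Proof.
  intros HK Heq.
  assert (Hln2 : 0 < ln 2) by (rewrite <- ln_1; apply ln_increasing; lra).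
  assert (Hln6 : 0 < ln 6) by (rewrite <- ln_1; apply ln_increasing; lra).
  assert (HKpos : 1 <= INR K) by (apply (le_INR 1); lia).
  destruct (Z_lt_le_dec 0 z) as [Hz|Hz].
  2:{ assert (IZR z <= 0) by (apply IZR_le; lia). nra. }
  destruct (Z_of_nat_complete z) as [m ->]; [lia|].
  rewrite <- INR_IZR_INZ, <- !ln_pow in Heq by lra.
  apply ln_inv in Heq; [| apply pow_lt; lra | apply pow_lt; lra].
  replace 2 with (INR 2) in Heq by (simpl; lra).
  replace 6 with (INR 6) in Heq by (simpl; lra).
  rewrite <- !pow_INR in Heq. apply INR_eq in Heq.
  destruct m as [|m]; [lia|].
  apply (pow2_mod3_nonzero K). rewrite Heq, Nat.pow_succ_r', Nat.Div0.mul_mod; reflexivity.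
Qed.

Lemma f_pos y : 0 < y -> 0 < Defs.f y.
Proof. intros; unfold Defs.f; destruct Rlt_dec; lra. Qed.

Lemma f_iter_pos n y : 0 < y -> 0 < f_iter n y.
Proof. intros Hy; induction n; simpl; [|apply f_pos]; assumption. Qed.

Lemma ln3_f y : 0 < y -> ln (3 * Defs.f y) = rot (ln 6) (ln 2) (ln (3 * y)).
Proof.
  intros Hy.
  assert (Hsum : ln (3 * y) + ln 2 = ln 6 + ln y).
  { replace 6 with (2 * 3) by lra. rewrite !ln_mult by lra. ring. }
  unfold Defs.f, rot. rewrite Hsum.
  destruct (Rlt_dec y 1) as [Hy1|Hy1], (Rlt_dec (ln 6 + ln y) (ln 6)) as [Hl|Hl].
  - replace (3 * (2 * y)) with (6 * y) by ring. rewrite ln_mult; lra.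
  - assert (ln y < ln 1) by (apply ln_increasing; lra). rewrite ln_1 in *. lra.
  - pose proof (ln_le_ln 1 y ltac:(lra) ltac:(lra)). rewrite ln_1 in *. lra.
  - replace (3 * (y / 3)) with y by field. ring.
Qed.

Lemma ln3_f_iter n y : 0 < y ->
  ln (3 * f_iter n y) = Nat.iter n (rot (ln 6) (ln 2)) (ln (3 * y)).
Proof.
  intros Hy. induction n as [|n IH]; [reflexivity|].
  simpl. rewrite ln3_f, IH by (apply f_iter_pos; assumption). reflexivity.
Qed.

Theorem mainTheorem3 :
  forall a b : R, 1/3 <= a -> a < b -> b <= 2 ->
  exists N : nat,
    forall (x : R) (n : nat), 1/3 <= x <= 2 ->
      a < f_iter n x < b ->
      exists m : nat, (n < m <= n + N)%nat /\ a < f_iter m x < b.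
Proof.
  intros a b Ha Hab Hb.
  assert (Hln : 0 < ln 2 < ln 6) by (split; rewrite <- ?ln_1; apply ln_increasing; lra).
  destruct (rot_uniformly_recurrent (ln 6) (ln 2) Hln ln2_ln6_irrational
              (ln (3 * a)) (ln (3 * b))) as [N HN].
  { rewrite <- ln_1. apply ln_le_ln; lra. }
  { apply ln_increasing; lra. }
  { apply ln_le_ln; lra. }
  exists N. intros x n Hx _.
  assert (Hx0 : 0 <= ln (3 * x) <= ln 6).
  { split; [rewrite <- ln_1|]; apply ln_le_ln; lra. }
  destruct (HN (Nat.iter n (rot (ln 6) (ln 2)) (ln (3 * x)))) as [j [Hj [Hlo Hhi]]].
  { apply iter_rot_range_closed; [lra | assumption]. }
  exists (j + n)%nat. split; [lia|].
  rewrite <- Nat.iter_add, <- ln3_f_iter in Hlo, Hhi by lra.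
  pose proof (f_iter_pos (j + n) x ltac:(lra)).
  apply ln_lt_inv in Hlo, Hhi; lra.
Qed.
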